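(* Let $X$ be a real Banach space with dual $X^*$, let $A\colon X\rightrightarrows X^*$ be a set-valued operator, let $C$ be a nonempty closed convex subset of $X$, and let $(z,z^* )\in X\times X^*$. Define $I_C\colon X\rightrightarrows X^*$ by $I_C(x)=\{0\}$ if $x\in C$ and $I_C(x)=\varnothing$ otherwise, and for $a\in C$ let $T_C(a)=\{x\in X:\sup\langle x,N_C(a)\rangle\le 0\}$. Then $(z,z^* )$ is monotonically related to $\operatorname{gra}(A+N_C)$ if and only if $(z,z^* )$ is monotonically related to $\operatorname{gra}(A+I_C)$ and $z\in\bigcap_{a\in\operatorname{dom}A\cap C}\big(a+T_C(a)\big)$.
   Context: $\langle\cdot,\cdot\rangle$ is the pairing between $X$ and $X^*$. For $B\colon X\rightrightarrows X^*$, $\operatorname{gra}B=\{(x,x^* ): x^*\in Bx\}$, $\operatorname{dom}B=\{x: Bx\neq\varnothing\}$, and sums are $(B_1+B_2)x=\{b_1^*+b_2^*: b_1^*\in B_1x,\ b_2^*\in B_2x\}$. A point $(z,z^* )$ is monotonically related to a set $G\subseteq X\times X^*$ if $\langle x-z,x^*-z^*\rangle\ge 0$ for all $(x,x^* )\in G$. The normal cone operator is $N_C(x)=\{x^*\in X^*:\sup_{c\in C}\langle c-x,x^*\rangle\le 0\}$ for $x\in C$ and $N_C(x)=\varnothing$ for $x\notin C$. *)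

From HB Require Import structures.
From mathcomp Require Import all_boot all_order all_algebra.
From mathcomp Require Import all_classical all_reals.
From mathcomp Require Import ereal topology normedtype convex.
Set Implicit Arguments. Unset Strict Implicit. Unset Printing Implicit Defensive.
Import Order.TTheory GRing.Theory Num.Theory.
Import numFieldNormedType.Exports.
Local Open Scope classical_set_scope.
Local Open Scope ring_scope.

Section Defs.
Context {R : realType} {X : normedModType R}.

(* Elements of the dual X^*: continuous linear functionals X -> R.
   Pairing <x, x^*> := x^* x. *)
Definition is_dual (f : X -> R) : Prop :=
  (forall (a : R) (x y : X), f (a *: x + y) = a * f x + f y) /\ continuous f.

(* Set-valued operators X ⇉ X^* are maps X -> set (X -> R) whose values
   consist of dual elements (hypothesis stated in the theorem). *)
Definition gra (B : X -> set (X -> R)) : set (X * (X -> R)) :=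
  [set p | B p.1 p.2].

Definition dom (B : X -> set (X -> R)) : set X := [set x | B x !=set0].

Definition op_sum (B1 B2 : X -> set (X -> R)) : X -> set (X -> R) :=
  fun x => [set b1 \+ b2 | b1 in B1 x & b2 in B2 x].

Definition mono_related (z : X) (zs : X -> R) (G : set (X * (X -> R))) : Prop :=
  forall x xs, G (x, xs) -> 0 <= (xs \- zs) (x - z).

Definition normal_cone (C : set X) (x : X) : set (X -> R) :=
  [set xs | C x /\ is_dual xs /\
            (ereal_sup [set (xs (c - x))%:E | c in C] <= 0)%E].

Definition ind_op (C : set X) (x : X) : set (X -> R) :=
  [set xs | C x /\ xs = (fun _ => 0)].

Definition tangent_cone (C : set X) (a : X) : set X :=
  [set x | (ereal_sup [set (xs x)%:E | xs in normal_cone C a] <= 0)%E].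

End Defs.

From HB Require Import structures.
From mathcomp Require Import all_boot all_order all_algebra.
From mathcomp Require Import all_classical all_reals.
From mathcomp Require Import ereal topology normedtype convex.
From mathcomp Require Import ring lra.
Set Implicit Arguments. Unset Strict Implicit. Unset Printing Implicit Defensive.
Import Order.TTheory GRing.Theory Num.Theory.
Import numFieldNormedType.Exports.
Local Open Scope classical_set_scope.
Local Open Scope ring_scope.

(* Since N_C(x) is a cone containing 0, the pairing <x - z, a + n - z^*> is
   nonnegative for every n in N_C(x) iff <x - z, a - z^*> >= 0 (take n = 0) and
   <x - z, n> >= 0 for every such n (scale n up); the latter says exactly that
   z - x lies in the tangent cone T_C(x). Away from C both sides are vacuous. *)

Lemma cone_add_ge0P (R : realFieldType) (S : set R) (c : R) :
  S 0 -> (forall t s, 0 <= t -> S s -> S (t * s)) ->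
  (forall s, S s -> 0 <= c + s) <-> 0 <= c /\ (forall s, S s -> 0 <= s).
Proof.
move=> S0 SZ; split=> [h | [c0 S_ge0] s Ss]; last exact: addr_ge0 (S_ge0 _ Ss).
split=> [|s Ss]; first by have := h 0 S0; rewrite addr0.
rewrite leNgt; apply/negP => s_lt0.
have t_ge0 : 0 <= (`|c| + 1) / - s by rewrite divr_ge0 // oppr_ge0 ltW.
have := h _ (SZ _ _ t_ge0 Ss).
have -> : (`|c| + 1) / - s * s = - (`|c| + 1) by field; rewrite lt_eqF.
have := ler_norm c; lra.
Qed.

Section DualCones.
Context {R : realType} {X : normedModType R}.
Implicit Types (C : set X) (f : X -> R).

Lemma dual0 f : is_dual f -> f 0 = 0.
Proof.
case=> lin _; have := lin 1 0 0; rewrite scale1r addr0 mul1r => h.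
by apply: (addrI (f 0)); rewrite addr0 -h.
Qed.

Lemma dualN f v : is_dual f -> f (- v) = - f v.
Proof.
move=> fd; have [lin _] := fd; have := lin (-1) v 0.
by rewrite addr0 scaleN1r mulN1r dual0 // addr0.
Qed.

Lemma dualZl f t : is_dual f -> is_dual (fun v => t * f v).
Proof.
case=> lin fc; split; first by move=> a x y; rewrite lin mulrDr mulrCA mulrA.
by move=> x; apply: cvgMl_tmp; exact: fc.
Qed.

Lemma normal_cone_le0 C x f c : normal_cone C x f -> C c -> f (c - x) <= 0.
Proof.
case=> _ [_ sup_le0] Cc; rewrite -lee_fin; apply: le_trans sup_le0.
by apply: ereal_sup_ubound; exists c.
Qed.

Lemma normal_cone0 C x : C x -> normal_cone C x (fun _ => 0).
Proof.
move=> Cx; split=> //; split; last by apply: ge_ereal_sup => _ [c _ <-].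
by split=> [a u v|u]; [rewrite mulr0 addr0 | exact: cvg_cst].
Qed.

Lemma normal_coneZl C x f t : 0 <= t ->
  normal_cone C x f -> normal_cone C x (fun v => t * f v).
Proof.
move=> t_ge0 Nf; have [Cx [fd _]] := Nf; split=> //; split; first exact: dualZl.
apply: ge_ereal_sup => _ [c Cc <-]; rewrite lee_fin.
apply: mulr_ge0_le0 => //; exact: normal_cone_le0 Nf Cc.
Qed.

Lemma tangent_coneP C a v :
  tangent_cone C a v <-> forall f, normal_cone C a f -> f v <= 0.
Proof.
split=> [sup_le0 f Nf | le0]; last by apply: ge_ereal_sup => _ [f /le0 ? <-].
by rewrite -lee_fin; apply: le_trans sup_le0; apply: ereal_sup_ubound; exists f.
Qed.

Lemma normal_cone_add_ge0P C x z c : C x ->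
  (forall f, normal_cone C x f -> 0 <= c + f (x - z)) <->
  0 <= c /\ tangent_cone C x (z - x).
Proof.
move=> Cx; pose S := [set f (x - z) | f in normal_cone C x].
have S0 : S 0 by exists (fun _ => 0); [exact: normal_cone0 |].
have SZ t s : 0 <= t -> S s -> S (t * s).
  by move=> t_ge0 [f Nf <-]; exists (fun v => t * f v) => //; exact: normal_coneZl.
have tangentS : (forall s, S s -> 0 <= s) <-> tangent_cone C x (z - x).
  rewrite tangent_coneP; split=> [S_ge0 f Nf | T _ [f Nf <-]]; have [_ [fd _]] := Nf.
    by rewrite -oppr_ge0 -dualN // opprB; apply: S_ge0; exists f.
  by rewrite -opprB dualN // oppr_ge0; exact: T.
apply: iff_trans (iff_trans (cone_add_ge0P c S0 SZ) (and_iff_compat_l _ tangentS)).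
by split=> [h _ [f Nf <-] | h f Nf]; [exact: h | apply: h; exists f].
Qed.

Lemma mono_related_op_sumP (A B : X -> set (X -> R)) z zs :
  mono_related z zs (gra (op_sum A B)) <->
  forall x a b, A x a -> B x b -> 0 <= (a \- zs) (x - z) + b (x - z).
Proof.
rewrite /mono_related /gra /op_sum /=.
split=> [h x a b Aa Bb | h x _ [a Aa [b Bb <-]]].
  have /= := h x (a \+ b) (ex_intro2 _ _ a Aa (ex_intro2 _ _ b Bb erefl)).
  by rewrite addrAC.
by rewrite /= addrAC; exact: h.
Qed.

End DualCones.

Theorem lemma2p6 (R : realType) (X : completeNormedModType R)
  (A : X -> set (X -> R)) (C : set X) (z : X) (zs : X -> R) :
  (forall x xs, A x xs -> is_dual xs) ->
  C !=set0 -> closed C -> convex_set (C : set (convex_lmodType X)) ->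
  is_dual zs ->
  (mono_related z zs (gra (op_sum A (normal_cone C))) <->
   (mono_related z zs (gra (op_sum A (ind_op C))) /\
    z \in \bigcap_(a in dom A `&` C) [set a + t | t in tangent_cone C a])).
Proof.
move=> _ _ _ _ _; rewrite !mono_related_op_sumP inE.
split=> [mono_N | [mono_I z_tangent] x a f Aa Nf].
- split=> [x a _ Aa [Cx ->] | x [[a Aa] Cx]].
    rewrite addr0; apply: ((normal_cone_add_ge0P z _ Cx).1 _).1 => f.
    exact: mono_N Aa.
  exists (z - x); last by rewrite addrC subrK.
  apply: ((normal_cone_add_ge0P z _ Cx).1 _).2 => f; exact: mono_N Aa.
- have [Cx _] := Nf; apply: (normal_cone_add_ge0P z _ Cx).2 Nf; split.
    by have := mono_I x a (fun _ => 0) Aa (conj Cx erefl); rewrite addr0.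
  have [t T_t <-] := z_tangent x (conj (ex_intro _ a Aa) Cx).
  by rewrite addrC addKr.
Qed.
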